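(* Let $\gamma\in\mathcal{C}$ be a convex curve. Then $$\frac{L_*(\gamma)^2}{4A_U}=A_\gamma-2A_{WC(\gamma)}-A_{CWMS(\gamma)}.$$
   Context: Standing setting. $[a,b]$ is the $2\times2$ determinant with columns $a,b$. The unit ball $U$ of a normed plane is compact convex, origin-symmetric, with nonempty interior, and boundary $u=\partial U$ a union of $2n$ arcs $u_{i+n}=-u_i$, each a smooth strictly convex arc or a segment; $u$ is parameterized as a closed curve $u:[0,2T]\to\mathbb{R}^2$ with $u(t+T)=-u(t)$, smooth with $u'\ne0$ on each interval $[t_i,t_{i+1}]$ between vertices ($[u',u'']\neq 0$ on strictly convex arcs); $A_U=\frac12\int_0^{2T}[u,u']dt$ is the area of $U$. Admissible class $\mathcal{C}$: closed continuous curves $\gamma:[0,2T]\to\mathbb{R}^2$ (extended $2T$-periodically), smooth on each $[t_i,t_{i+1}]$ with $\gamma'(t)=r(t)u'(t)$ for a scalar function $r$. Dual length $L_*(\gamma)=\int_0^{2T} r(t)[u,u'](t)\,dt$; mean width $w_\gamma=L_*(\gamma)/A_U$. $A_\gamma=\frac12\int_0^{2T}[\gamma,\gamma'](t)dt$ (the signed area, equal to the enclosed area for a positively oriented convex curve). $WC(\gamma)(t)=\frac12(\gamma(t)+\gamma(t+T))$, which is $T$-periodic, and $A_{WC(\gamma)}=\frac12\int_0^{T}[WC(\gamma),WC(\gamma)'](t)\,dt$ is its signed area over one period. $CWMS(\gamma)(t)=\frac12(\gamma(t)-\gamma(t+T)-w_\gamma u(t))$ and $A_{CWMS(\gamma)}=\frac12\int_0^{2T}[CWMS(\gamma),CWMS(\gamma)'](t)\,dt$.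 *)

From Stdlib Require Import Reals.
From Coquelicot Require Import Coquelicot.
Open Scope R_scope.

Definition pt := (R * R)%type.
Definition padd (a b : pt) : pt := (fst a + fst b, snd a + snd b).
Definition pscale (k : R) (a : pt) : pt := (k * fst a, k * snd a).
Definition popp (a : pt) : pt := (- fst a, - snd a).

Definition det (a b : pt) : R := fst a * snd b - snd a * fst b.

Definition dcurve (c : R -> pt) (t : R) : pt :=
  (Derive (fun s => fst (c s)) t, Derive (fun s => snd (c s)) t).

Definition smooth_curve (g : R -> pt) : Prop :=
  forall (k : nat) (x : R),
    ex_derive_n (fun s => fst (g s)) k x /\ ex_derive_n (fun s => snd (g s)) k x.

(* c is smooth on the closed interval [a,b]: it is the restriction of a
   C^infinity curve g; derivatives on [a,b] (incl. one-sided ones at the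
   endpoints) are those of g. *)
Definition smooth_ext_on (a b : R) (c g : R -> pt) : Prop :=
  smooth_curve g /\ forall x, a <= x <= b -> g x = c x.

(* Euclidean topology of the plane (all norms are equivalent) *)
Definition dist2 (p q : pt) : R := (fst p - fst q)^2 + (snd p - snd q)^2.
Definition interior_pt (K : pt -> Prop) (p : pt) : Prop :=
  exists eps, 0 < eps /\ forall q, dist2 p q < eps^2 -> K q.
Definition closed_set (K : pt -> Prop) : Prop :=
  forall p, (forall eps, 0 < eps -> exists q, K q /\ dist2 p q < eps^2) -> K p.
Definition bounded_set (K : pt -> Prop) : Prop :=
  exists M, forall p, K p -> dist2 p (0,0) <= M.
Definition convex_set (K : pt -> Prop) : Prop :=
  forall p q l, K p -> K q -> 0 <= l <= 1 ->
    K (padd (pscale (1 - l) p) (pscale l q)).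
Definition convex_body (K : pt -> Prop) : Prop :=
  convex_set K /\ closed_set K /\ bounded_set K /\ exists p, interior_pt K p.
Definition boundary (K : pt -> Prop) (p : pt) : Prop :=
  K p /\ ~ interior_pt K p.

(* Data: U the unit ball, T > 0 the half period, n >= 1, vertices tv 0 < ... < tv (2n),
   u : R -> pt the boundary parameterization. *)
Record unit_ball_param (U : pt -> Prop) (T : R) (n : nat) (tv : nat -> R)
    (u : R -> pt) : Prop := {
  ub_T : 0 < T;
  ub_n : (1 <= n)%nat;
  ub_body : convex_body U;
  ub_sym : forall p, U p -> U (popp p);
  ub_t0 : tv 0%nat = 0;
  ub_tend : tv (2 * n)%nat = 2 * T;
  ub_tinc : forall i, (i < 2 * n)%nat -> tv i < tv (S i);
  ub_tsym : forall i, (i <= n)%nat -> tv (i + n)%nat = tv i + T;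
  ub_antipodal : forall t, u (t + T) = popp (u t);
  ub_image : forall p, boundary U p <-> exists t, 0 <= t <= 2 * T /\ u t = p;
  ub_simple : forall s t, 0 <= s < 2 * T -> 0 <= t < 2 * T -> u s = u t -> s = t;
  (* positive orientation, so that A_U is the area of U *)
  ub_orient : forall i t, (i < 2 * n)%nat -> tv i < t < tv (S i) ->
      0 < det (u t) (dcurve u t);
  ub_arcs : forall i, (i < 2 * n)%nat -> exists g,
      smooth_ext_on (tv i) (tv (S i)) u g /\
      (forall t, tv i <= t <= tv (S i) -> dcurve g t <> (0, 0)) /\
      ((forall t, tv i <= t <= tv (S i) -> det (dcurve g t) (dcurve (dcurve g) t) <> 0)
       \/ (forall s t, tv i <= s <= tv (S i) -> tv i <= t <= tv (S i) ->
             det (dcurve g s) (dcurve g t) = 0))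
}.

Definition area_U (T : R) (u : R -> pt) : R :=
  / 2 * RInt (fun t => det (u t) (dcurve u t)) 0 (2 * T).

(* admissible class C: gamma closed, continuous, 2T-periodic, smooth on each
   [t_i, t_{i+1}], with gamma' = r u' (checked on the open arcs, where u' is
   the ordinary derivative). *)
Definition admissible (T : R) (n : nat) (tv : nat -> R) (u : R -> pt)
    (gamma : R -> pt) (r : R -> R) : Prop :=
  (forall t, gamma (t + 2 * T) = gamma t) /\
  (forall t, continuous (fun s => fst (gamma s)) t /\
             continuous (fun s => snd (gamma s)) t) /\
  (forall i, (i < 2 * n)%nat -> exists g, smooth_ext_on (tv i) (tv (S i)) gamma g) /\
  (forall i t, (i < 2 * n)%nat -> tv i < t < tv (S i) ->
     dcurve gamma t = pscale (r t) (dcurve u t)).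

Definition convex_curve (T : R) (gamma : R -> pt) : Prop :=
  exists K, convex_body K /\
    forall p, boundary K p <-> exists t, 0 <= t <= 2 * T /\ gamma t = p.

Definition dual_length (T : R) (u : R -> pt) (r : R -> R) : R :=
  RInt (fun t => r t * det (u t) (dcurve u t)) 0 (2 * T).

Definition mean_width (T : R) (u : R -> pt) (r : R -> R) : R :=
  dual_length T u r / area_U T u.

Definition area_curve (T : R) (gamma : R -> pt) : R :=
  / 2 * RInt (fun t => det (gamma t) (dcurve gamma t)) 0 (2 * T).

Definition WC (T : R) (gamma : R -> pt) (t : R) : pt :=
  pscale (/ 2) (padd (gamma t) (gamma (t + T))).

Definition area_WC (T : R) (gamma : R -> pt) : R :=
  / 2 * RInt (fun t => det (WC T gamma t) (dcurve (WC T gamma) t)) 0 T.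

Definition CWMS (T : R) (u : R -> pt) (r : R -> R) (gamma : R -> pt) (t : R) : pt :=
  pscale (/ 2) (padd (padd (gamma t) (popp (gamma (t + T))))
                     (popp (pscale (mean_width T u r) (u t)))).

Definition area_CWMS (T : R) (u : R -> pt) (r : R -> R) (gamma : R -> pt) : R :=
  / 2 * RInt (fun t => det (CWMS T u r gamma t) (dcurve (CWMS T u r gamma) t)) 0 (2 * T).

From Stdlib Require Import Reals Lra Lia.
From Coquelicot Require Import Coquelicot.
Open Scope R_scope.

(* Write g = gamma(t), h = gamma(t+T), v = u(t) and w = w_gamma.  Since
   WC = (g+h)/2 and CWMS = (g-h-wv)/2, bilinearity of [.,.] gives the pointwise
   identity (balance_pointwise)
     [g,g'] + [h,h'] - 2[WC,WC'] - 2[CWMS,CWMS'] - w([v,g'] + [-v,h']) + w^2/2 [v,v']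
       = w/2 ([g'-h', v] + [g-h, v'])  =  d/dt ( w/2 [g-h, v] ),
   and gamma' = r u' turns [v,g'] + [-v,h'] into the dual-length density on
   [t, t+T].  Integrating over [0,T] the boundary term vanishes, because
   gamma is 2T-periodic and u(t+T) = -u(t); each of the areas A_gamma, A_CWMS,
   A_U and L_* over [0,2T] splits into two integrals over [0,T] (the last three
   being T-periodic densities), and the resulting relation
   2(A_gamma - 2A_WC - A_CWMS) = w L_* - w^2 A_U / 2 with w = L_*/A_U is the claim. *)

Definition derivable_curve (c : R -> pt) (t : R) : Prop :=
  ex_derive (fun s => fst (c s)) t /\ ex_derive (fun s => snd (c s)) t.

Definition continuous_curve (c : R -> pt) (t : R) : Prop :=
  continuous (fun s => fst (c s)) t /\ continuous (fun s => snd (c s)) t.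

Definition C1_curve (c : R -> pt) : Prop :=
  forall t, derivable_curve c t /\ continuous_curve (dcurve c) t.

Lemma dcurve_local (c1 c2 : R -> pt) (t : R) :
  locally t (fun s => c1 s = c2 s) -> dcurve c1 t = dcurve c2 t.
Proof.
  intro E. unfold dcurve.
  f_equal; apply Derive_ext_loc; apply filter_imp with (2 := E);
    intros s e; rewrite e; reflexivity.
Qed.

Lemma dcurve_shift (c : R -> pt) (T t : R) :
  dcurve (fun s => c (s + T)) t = dcurve c (t + T).
Proof.
  assert (shift : forall f : R -> R, Derive (fun s => f (s + T)) t = Derive f (t + T)).
  { intro f. unfold Derive. f_equal. apply Lim_ext. intro y.
    replace (t + T + y) with (t + y + T) by ring. reflexivity. }
  unfold dcurve. rewrite (shift (fun s => fst (c s))), (shift (fun s => snd (c s))).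
  reflexivity.
Qed.

Lemma dcurve_padd (c1 c2 : R -> pt) (t : R) :
  derivable_curve c1 t -> derivable_curve c2 t ->
  dcurve (fun s => padd (c1 s) (c2 s)) t = padd (dcurve c1 t) (dcurve c2 t).
Proof.
  intros [D11 D12] [D21 D22]. unfold dcurve, padd; simpl.
  rewrite (Derive_plus (fun s => fst (c1 s)) (fun s => fst (c2 s))) by assumption.
  rewrite (Derive_plus (fun s => snd (c1 s)) (fun s => snd (c2 s))) by assumption.
  reflexivity.
Qed.

Lemma dcurve_pscale (k : R) (c : R -> pt) (t : R) :
  dcurve (fun s => pscale k (c s)) t = pscale k (dcurve c t).
Proof. unfold dcurve, pscale; simpl. rewrite !Derive_scal. reflexivity. Qed.

Lemma dcurve_popp (c : R -> pt) (t : R) :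
  dcurve (fun s => popp (c s)) t = popp (dcurve c t).
Proof. unfold dcurve, popp; simpl. rewrite !Derive_opp. reflexivity. Qed.

Lemma dcurve_antipodal (c : R -> pt) (T : R) :
  (forall s, c (s + T) = popp (c s)) -> forall t, dcurve c (t + T) = popp (dcurve c t).
Proof.
  intros anti t. rewrite <- dcurve_shift, <- dcurve_popp.
  apply dcurve_local, filter_forall. exact anti.
Qed.

Lemma C1_derivable (c : R -> pt) (t : R) : C1_curve c -> derivable_curve c t.
Proof. intro C. apply C. Qed.

Lemma C1_continuous (c : R -> pt) (t : R) : C1_curve c -> continuous_curve c t.
Proof.
  intro C. destruct (C t) as [[D1 D2] _].
  split; apply (ex_derive_continuous (K := R_AbsRing) (V := R_NormedModule)); assumption.
Qed.

Lemma C1_padd (c1 c2 : R -> pt) :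
  C1_curve c1 -> C1_curve c2 -> C1_curve (fun s => padd (c1 s) (c2 s)).
Proof.
  intros C1 C2 t.
  destruct (C1 t) as [[D11 D12] [K11 K12]], (C2 t) as [[D21 D22] [K21 K22]].
  assert (E : forall s, dcurve (fun s => padd (c1 s) (c2 s)) s = padd (dcurve c1 s) (dcurve c2 s))
    by (intro s; apply dcurve_padd; apply C1_derivable; assumption).
  split; [split|split].
  - simpl; apply (ex_derive_plus (fun s => fst (c1 s)) (fun s => fst (c2 s))); assumption.
  - simpl; apply (ex_derive_plus (fun s => snd (c1 s)) (fun s => snd (c2 s))); assumption.
  - apply continuous_ext with (fun s => fst (dcurve c1 s) + fst (dcurve c2 s)).
    + intro s. rewrite E. reflexivity.
    + apply (continuous_plus (V := R_NormedModule)); assumption.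
  - apply continuous_ext with (fun s => snd (dcurve c1 s) + snd (dcurve c2 s)).
    + intro s. rewrite E. reflexivity.
    + apply (continuous_plus (V := R_NormedModule)); assumption.
Qed.

Lemma C1_pscale (k : R) (c : R -> pt) : C1_curve c -> C1_curve (fun s => pscale k (c s)).
Proof.
  intros C t. destruct (C t) as [[D1 D2] [K1 K2]].
  split; [split|split].
  - simpl; apply (ex_derive_scal (fun s => fst (c s))); assumption.
  - simpl; apply (ex_derive_scal (fun s => snd (c s))); assumption.
  - apply continuous_ext with (fun s => k * fst (dcurve c s)).
    + intro s. rewrite dcurve_pscale. reflexivity.
    + apply (continuous_mult (K := R_AbsRing)); [apply continuous_const | assumption].
  - apply continuous_ext with (fun s => k * snd (dcurve c s)).
    + intro s. rewrite dcurve_pscale. reflexivity.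
    + apply (continuous_mult (K := R_AbsRing)); [apply continuous_const | assumption].
Qed.

Lemma C1_popp (c : R -> pt) : C1_curve c -> C1_curve (fun s => popp (c s)).
Proof.
  intros C t. destruct (C t) as [[D1 D2] [K1 K2]].
  split; [split|split].
  - simpl; apply (ex_derive_opp (fun s => fst (c s))); assumption.
  - simpl; apply (ex_derive_opp (fun s => snd (c s))); assumption.
  - apply continuous_ext with (fun s => - fst (dcurve c s)).
    + intro s. rewrite dcurve_popp. reflexivity.
    + apply (continuous_opp (V := R_NormedModule)); assumption.
  - apply continuous_ext with (fun s => - snd (dcurve c s)).
    + intro s. rewrite dcurve_popp. reflexivity.
    + apply (continuous_opp (V := R_NormedModule)); assumption.
Qed.

Lemma C1_shift (T : R) (c : R -> pt) : C1_curve c -> C1_curve (fun s => c (s + T)).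
Proof.
  intros C t. destruct (C (t + T)) as [[D1 D2] [K1 K2]].
  assert (shift_cont : forall f : R -> R, continuous f (t + T) -> continuous (fun s => f (s + T)) t).
  { intros f K. apply (continuous_comp (fun s => s + T) f); [|exact K].
    apply (continuous_plus (V := R_NormedModule)); [apply continuous_id | apply continuous_const]. }
  split; [split|split].
  - apply (ex_derive_comp (fun s => fst (c s)) (fun s => s + T)); [exact D1|].
    apply (ex_derive_plus (fun s => s) (fun _ => T)); [apply ex_derive_id | apply ex_derive_const].
  - apply (ex_derive_comp (fun s => snd (c s)) (fun s => s + T)); [exact D2|].
    apply (ex_derive_plus (fun s => s) (fun _ => T)); [apply ex_derive_id | apply ex_derive_const].
  - apply continuous_ext with (fun s => fst (dcurve c (s + T))).
    + intro s. rewrite dcurve_shift. reflexivity.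
    + exact (shift_cont _ K1).
  - apply continuous_ext with (fun s => snd (dcurve c (s + T))).
    + intro s. rewrite dcurve_shift. reflexivity.
    + exact (shift_cont _ K2).
Qed.

Lemma C1_of_smooth (g : R -> pt) : smooth_curve g -> C1_curve g.
Proof.
  intros S t. destruct (S 1%nat t) as [D1 D2], (S 2%nat t) as [E1 E2].
  split; [split; assumption|].
  split; apply (ex_derive_continuous (K := R_AbsRing) (V := R_NormedModule)); assumption.
Qed.

Lemma det_continuous (p q : R -> pt) (t : R) :
  continuous_curve p t -> continuous_curve q t -> continuous (fun s => det (p s) (q s)) t.
Proof.
  intros [P1 P2] [Q1 Q2]. unfold det.
  apply (continuous_minus (V := R_NormedModule));
    apply (continuous_mult (K := R_AbsRing)); assumption.
Qed.

Lemma det_derive (p q : R -> pt) (t : R) :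
  derivable_curve p t -> derivable_curve q t ->
  is_derive (fun s => det (p s) (q s)) t (det (dcurve p t) (q t) + det (p t) (dcurve q t)).
Proof.
  intros [P1 P2] [Q1 Q2].
  pose proof (fun f (D : ex_derive f t) => Derive_correct f t D) as DC.
  evar (l : R).
  assert (H : is_derive (fun s => fst (p s) * snd (q s) - snd (p s) * fst (q s)) t l).
  { apply (is_derive_minus (fun s => fst (p s) * snd (q s)) (fun s => snd (p s) * fst (q s)));
      apply (is_derive_mult (fun s => fst (p s)) (fun s => snd (q s)))
      || apply (is_derive_mult (fun s => snd (p s)) (fun s => fst (q s)));
      auto; intros; apply Rmult_comm. }
  replace (det (dcurve p t) (q t) + det (p t) (dcurve q t)) with l; [exact H|].
  unfold l, det, dcurve; simpl. unfold minus, plus, opp, mult; simpl. ring.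
Qed.

Lemma ex_RInt_det_representative (a b k : R) (F : R -> R) (c1 c2 : R -> pt) :
  a < b -> C1_curve c1 -> C1_curve c2 ->
  (forall t, a < t < b -> F t = k * det (c1 t) (dcurve c2 t)) -> ex_RInt F a b.
Proof.
  intros ab C1 C2 E.
  apply (ex_RInt_ext (fun t => k * det (c1 t) (dcurve c2 t))).
  - rewrite Rmin_left, Rmax_right by lra. intros t Ht. symmetry. exact (E t Ht).
  - apply (ex_RInt_continuous (V := R_CompleteNormedModule)). intros t _.
    apply (continuous_mult (K := R_AbsRing)); [apply continuous_const|].
    apply det_continuous; [apply C1_continuous | apply C2]; assumption.
Qed.

Lemma ex_RInt_partition (f : R -> R) (tv : nat -> R) (k : nat) :
  (forall i, (i < k)%nat -> ex_RInt f (tv i) (tv (S i))) -> ex_RInt f (tv 0%nat) (tv k).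
Proof.
  induction k as [|k IH]; intro H; [apply ex_RInt_point|].
  apply ex_RInt_Chasles with (tv k); [apply IH; intros i Hi|]; apply H; lia.
Qed.

Lemma is_RInt_partition_telescope (f F : R -> R) (tv : nat -> R) (k : nat) :
  (forall i, (i < k)%nat -> is_RInt f (tv i) (tv (S i)) (F (tv (S i)) - F (tv i))) ->
  is_RInt f (tv 0%nat) (tv k) (F (tv k) - F (tv 0%nat)).
Proof.
  induction k as [|k IH]; intro H.
  - rewrite Rminus_diag. apply (is_RInt_point f).
  - replace (F (tv (S k)) - F (tv 0%nat))
      with (plus (F (tv k) - F (tv 0%nat)) (F (tv (S k)) - F (tv k)))
      by (unfold plus; simpl; ring).
    apply (is_RInt_Chasles f _ (tv k)); [apply IH; intros i Hi|]; apply H; lia.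
Qed.

Lemma RInt_split_half_period (F : R -> R) (T : R) :
  ex_RInt F 0 T -> ex_RInt (fun t => F (t + T)) 0 T ->
  RInt F 0 (2 * T) = RInt F 0 T + RInt (fun t => F (t + T)) 0 T.
Proof.
  intros I1 I2.
  assert (second : is_RInt F T (2 * T) (RInt (fun t => F (t + T)) 0 T)).
  { apply (is_RInt_ext (fun y => scal 1 (F ((1 * y + - T) + T)))).
    - intros y _. unfold scal; simpl. unfold mult; simpl.
      rewrite Rmult_1_l. f_equal. ring.
    - apply (is_RInt_comp_lin (fun t => F (t + T))).
      replace (1 * T + - T) with 0 by ring. replace (1 * (2 * T) + - T) with T by ring.
      exact (RInt_correct _ _ _ I2). }
  apply is_RInt_unique. exact (is_RInt_Chasles F 0 T (2 * T) _ _ (RInt_correct _ _ _ I1) second).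
Qed.

Lemma RInt_double_half_period (F : R -> R) (T : R) :
  ex_RInt F 0 T -> (forall t, F (t + T) = F t) -> RInt F 0 (2 * T) = 2 * RInt F 0 T.
Proof.
  intros I P.
  assert (E : RInt (fun t => F (t + T)) 0 T = RInt F 0 T) by (apply RInt_ext; intros t _; apply P).
  rewrite RInt_split_half_period, E; [| exact I |].
  - change (RInt F 0 T + RInt F 0 T = 2 * RInt F 0 T). ring.
  - apply (ex_RInt_ext F); [intros t _; symmetry; apply P | exact I].
Qed.

Lemma locally_in_interval (a b t : R) : a < t < b -> locally t (fun s => a <= s <= b).
Proof.
  intro Ht. apply (locally_interval _ t (Finite a) (Finite b)); simpl; try lra.
  intros y Ha Hb. lra.
Qed.

Lemma agree_on_interval (a b t : R) (c c' : R -> pt) :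
  (forall s, a <= s <= b -> c s = c' s) -> a < t < b ->
  c t = c' t /\ dcurve c t = dcurve c' t.
Proof.
  intros E Ht. split; [apply E; lra|].
  apply dcurve_local. apply filter_imp with (2 := locally_in_interval a b t Ht). exact E.
Qed.

Lemma det_pscale_r (k : R) (p q : pt) : k * det p q = det p (pscale k q).
Proof. unfold det, pscale; simpl; ring. Qed.

Definition area_density (c : R -> pt) (t : R) : R := det (c t) (dcurve c t).

Definition dual_density (u : R -> pt) (r : R -> R) (t : R) : R := r t * area_density u t.

(* The balance density; its integral over [0,T] is
   2 A_gamma - 4 A_WC - 2 A_CWMS - w L_* + w^2 A_U / 2, and it vanishes. *)
Definition balance_density (T : R) (u : R -> pt) (r : R -> R) (gamma : R -> pt) (t : R) : R :=
  area_density gamma t + area_density gamma (t + T)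
  - 2 * area_density (WC T gamma) t - 2 * area_density (CWMS T u r gamma) t
  - mean_width T u r * (dual_density u r t + dual_density u r (t + T))
  + / 2 * mean_width T u r ^ 2 * area_density u t.

(* A primitive of the balance density on each arc: w/2 [gamma(s) - gamma(s+T), u(s)]. *)
Definition balance_primitive (T : R) (u : R -> pt) (r : R -> R) (gamma : R -> pt) (s : R) : R :=
  / 2 * mean_width T u r * det (padd (gamma s) (popp (gamma (s + T)))) (u s).

Definition densities_integrable (T : R) (u : R -> pt) (r : R -> R) (gamma : R -> pt)
    (a b : R) : Prop :=
  ex_RInt (area_density gamma) a b /\ ex_RInt (fun t => area_density gamma (t + T)) a b /\
  ex_RInt (area_density (WC T gamma)) a b /\ ex_RInt (area_density (CWMS T u r gamma)) a b /\
  ex_RInt (dual_density u r) a b /\ ex_RInt (fun t => dual_density u r (t + T)) a b /\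
  ex_RInt (area_density u) a b.

Lemma densities_integrable_partition (T : R) (u : R -> pt) (r : R -> R) (gamma : R -> pt)
    (tv : nat -> R) (k : nat) :
  (forall i, (i < k)%nat -> densities_integrable T u r gamma (tv i) (tv (S i))) ->
  densities_integrable T u r gamma (tv 0%nat) (tv k).
Proof.
  intro H.
  repeat split; apply ex_RInt_partition; intros i Hi; apply (H i Hi).
Qed.

Lemma balance_pointwise (w : R) (G H V G' H' V' : pt) :
  det G G' + det H H'
  - 2 * det (pscale (/ 2) (padd G H)) (pscale (/ 2) (padd G' H'))
  - 2 * det (pscale (/ 2) (padd (padd G (popp H)) (popp (pscale w V))))
            (pscale (/ 2) (padd (padd G' (popp H')) (popp (pscale w V'))))
  - w * (det V G' + det (popp V) H') + / 2 * w ^ 2 * det V V'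
  = / 2 * w * (det (padd G' (popp H')) V + det (padd G (popp H)) V').
Proof.
  destruct G, H, V, G', H', V'. unfold det, pscale, padd, popp; simpl. field.
Qed.

Section Arc.

Variables (T a b : R) (u gamma : R -> pt) (r : R -> R) (g h v : R -> pt).

Hypothesis ab : a < b.
Hypotheses (Cg : C1_curve g) (Ch : C1_curve h) (Cv : C1_curve v).
Hypothesis represent : forall s, a <= s <= b ->
  gamma s = g s /\ gamma (s + T) = h s /\ u s = v s.
Hypothesis u_antipodal : forall s, u (s + T) = popp (u s).
Hypothesis tangent : forall t, a < t < b ->
  dcurve gamma t = pscale (r t) (dcurve u t) /\
  dcurve gamma (t + T) = pscale (r (t + T)) (dcurve u (t + T)).

Let w := mean_width T u r.
Let W (s : R) : pt := pscale (/ 2) (padd (g s) (h s)).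
Let D (s : R) : pt := padd (g s) (popp (h s)).
Let C (s : R) : pt := pscale (/ 2) (padd (D s) (popp (pscale w (v s)))).

Lemma C1_W : C1_curve W.
Proof.
  apply (C1_pscale (/ 2) (fun s => padd (g s) (h s))).
  apply (C1_padd g h); assumption.
Qed.

Lemma C1_D : C1_curve D.
Proof. apply (C1_padd g (fun s => popp (h s))); [|apply (C1_popp h)]; assumption. Qed.

Lemma C1_C : C1_curve C.
Proof.
  apply (C1_pscale (/ 2) (fun s => padd (D s) (popp (pscale w (v s))))).
  apply (C1_padd D (fun s => popp (pscale w (v s)))); [exact C1_D|].
  apply (C1_popp (fun s => pscale w (v s))), (C1_pscale w v); assumption.
Qed.

Lemma arc_gamma (t : R) : a < t < b -> gamma t = g t /\ dcurve gamma t = dcurve g t.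
Proof. apply agree_on_interval. intros s Hs. apply represent, Hs. Qed.

Lemma arc_gamma_shift (t : R) : a < t < b ->
  gamma (t + T) = h t /\ dcurve gamma (t + T) = dcurve h t.
Proof.
  intro Ht. rewrite <- dcurve_shift.
  apply (agree_on_interval a b t (fun s => gamma (s + T))); [|exact Ht].
  intros s Hs. apply represent, Hs.
Qed.

Lemma arc_u (t : R) : a < t < b -> u t = v t /\ dcurve u t = dcurve v t.
Proof. apply agree_on_interval. intros s Hs. apply represent, Hs. Qed.

Lemma arc_WC (t : R) : a < t < b -> WC T gamma t = W t /\ dcurve (WC T gamma) t = dcurve W t.
Proof.
  apply agree_on_interval. intros s Hs.
  destruct (represent s Hs) as [E1 [E2 _]]. unfold WC, W. rewrite E1, E2. reflexivity.
Qed.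

Lemma arc_CWMS (t : R) : a < t < b ->
  CWMS T u r gamma t = C t /\ dcurve (CWMS T u r gamma) t = dcurve C t.
Proof.
  apply agree_on_interval. intros s Hs.
  destruct (represent s Hs) as [E1 [E2 E3]]. unfold CWMS. rewrite E1, E2, E3. reflexivity.
Qed.

(* gamma' = r u' converts the dual densities into determinants of representatives. *)
Lemma arc_dual (t : R) : a < t < b -> dual_density u r t = det (v t) (dcurve g t).
Proof.
  intro Ht. destruct (arc_u t Ht) as [U1 U2], (arc_gamma t Ht) as [_ G2].
  unfold dual_density, area_density.
  rewrite det_pscale_r, <- (proj1 (tangent t Ht)), G2, U1. reflexivity.
Qed.

Lemma arc_dual_shift (t : R) : a < t < b ->
  dual_density u r (t + T) = det (popp (v t)) (dcurve h t).
Proof.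
  intro Ht. destruct (arc_u t Ht) as [U1 _], (arc_gamma_shift t Ht) as [_ G2].
  unfold dual_density, area_density.
  rewrite det_pscale_r, <- (proj2 (tangent t Ht)), G2, u_antipodal, U1. reflexivity.
Qed.

Lemma arc_densities_integrable : densities_integrable T u r gamma a b.
Proof.
  assert (rep : forall F c1 c2, C1_curve c1 -> C1_curve c2 ->
    (forall t, a < t < b -> F t = det (c1 t) (dcurve c2 t)) -> ex_RInt F a b).
  { intros F c1 c2 K1 K2 E. apply (ex_RInt_det_representative a b 1 F c1 c2 ab K1 K2).
    intros t Ht. rewrite Rmult_1_l. exact (E t Ht). }
  repeat split.
  - apply (rep _ g g Cg Cg). intros t Ht.
    destruct (arc_gamma t Ht) as [E1 E2]. unfold area_density. rewrite E1, E2. reflexivity.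
  - apply (rep _ h h Ch Ch). intros t Ht.
    destruct (arc_gamma_shift t Ht) as [E1 E2]. unfold area_density. rewrite E1, E2. reflexivity.
  - apply (rep _ W W C1_W C1_W). intros t Ht.
    destruct (arc_WC t Ht) as [E1 E2]. unfold area_density. rewrite E1, E2. reflexivity.
  - apply (rep _ C C C1_C C1_C). intros t Ht.
    destruct (arc_CWMS t Ht) as [E1 E2]. unfold area_density. rewrite E1, E2. reflexivity.
  - apply (rep _ v g Cv Cg). exact arc_dual.
  - apply (rep _ (fun s => popp (v s)) h (C1_popp v Cv) Ch). exact arc_dual_shift.
  - apply (rep _ v v Cv Cv). intros t Ht.
    destruct (arc_u t Ht) as [E1 E2]. unfold area_density. rewrite E1, E2. reflexivity.
Qed.

Lemma dcurve_W (t : R) : dcurve W t = pscale (/ 2) (padd (dcurve g t) (dcurve h t)).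
Proof.
  unfold W. rewrite dcurve_pscale, dcurve_padd; [reflexivity | apply C1_derivable..]; assumption.
Qed.

Lemma dcurve_D (t : R) : dcurve D t = padd (dcurve g t) (popp (dcurve h t)).
Proof.
  unfold D. rewrite dcurve_padd, dcurve_popp; [reflexivity | apply C1_derivable..]; auto.
  apply C1_popp, Ch.
Qed.

Lemma dcurve_C (t : R) :
  dcurve C t = pscale (/ 2) (padd (dcurve D t) (popp (pscale w (dcurve v t)))).
Proof.
  unfold C. rewrite dcurve_pscale, dcurve_padd, dcurve_popp, dcurve_pscale;
    [reflexivity | apply C1_derivable..]; [apply C1_D|].
  apply C1_popp, C1_pscale, Cv.
Qed.

Lemma arc_balance : is_RInt (balance_density T u r gamma) a b
  (balance_primitive T u r gamma b - balance_primitive T u r gamma a).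
Proof.
  set (P := fun s => / 2 * w * det (D s) (v s)).
  set (P' := fun s => / 2 * w * (det (dcurve D s) (v s) + det (D s) (dcurve v s))).
  assert (ends : forall s, a <= s <= b -> balance_primitive T u r gamma s = P s).
  { intros s Hs. destruct (represent s Hs) as [E1 [E2 E3]].
    unfold balance_primitive, P, D. rewrite E1, E2, E3. reflexivity. }
  assert (pointwise : forall t, a < t < b -> balance_density T u r gamma t = P' t).
  { intros t Ht.
    destruct (arc_gamma t Ht) as [G1 G2], (arc_gamma_shift t Ht) as [H1 H2],
      (arc_u t Ht) as [U1 U2], (arc_WC t Ht) as [W1 W2], (arc_CWMS t Ht) as [C1 C2].
    unfold balance_density. rewrite (arc_dual t Ht), (arc_dual_shift t Ht).
    unfold area_density. rewrite G1, G2, H1, H2, U1, U2, W1, W2, C1, C2.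
    unfold P'. rewrite dcurve_C, dcurve_W, !dcurve_D.
    apply balance_pointwise. }
  rewrite (ends b), (ends a) by lra.
  apply (is_RInt_ext P').
  { intros t Ht. symmetry. apply pointwise. rewrite Rmin_left, Rmax_right in Ht; lra. }
  replace (P b - P a) with (minus (P b) (P a)) by reflexivity.
  apply (is_RInt_derive (V := R_CompleteNormedModule) P P'); intros t _.
  - apply (is_derive_scal (fun s => det (D s) (v s))).
    apply det_derive; apply C1_derivable; [apply C1_D | exact Cv].
  - assert (K1 : continuous (fun s => det (dcurve D s) (v s)) t)
      by (apply det_continuous; [apply (C1_D t) | apply C1_continuous, Cv]).
    assert (K2 : continuous (fun s => det (D s) (dcurve v s)) t)
      by (apply det_continuous; [apply C1_continuous, C1_D | apply (Cv t)]).
    apply (continuous_mult (K := R_AbsRing) (fun _ => / 2 * w)); [apply continuous_const|].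
    apply (continuous_plus (V := R_NormedModule) _ _ t K1 K2).
Qed.

End Arc.

Lemma vertex_shift (U : pt -> Prop) (T : R) (n : nat) (tv : nat -> R) (u : R -> pt) (i : nat) :
  unit_ball_param U T n tv u -> (i < n)%nat ->
  tv (i + n)%nat = tv i + T /\ tv (S (i + n)) = tv (S i) + T.
Proof.
  intros HU Hi. split; [apply (ub_tsym _ _ _ _ _ HU); lia|].
  replace (S (i + n)) with (S i + n)%nat by lia. apply (ub_tsym _ _ _ _ _ HU); lia.
Qed.

Lemma arc_representatives (U : pt -> Prop) (T : R) (n : nat) (tv : nat -> R) (u : R -> pt)
    (gamma : R -> pt) (r : R -> R) (i : nat) :
  unit_ball_param U T n tv u -> admissible T n tv u gamma r -> (i < n)%nat ->
  exists g h v, C1_curve g /\ C1_curve h /\ C1_curve v /\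
    forall s, tv i <= s <= tv (S i) -> gamma s = g s /\ gamma (s + T) = h s /\ u s = v s.
Proof.
  intros HU [_ [_ [Harc _]]] Hi.
  destruct (ub_arcs _ _ _ _ _ HU i ltac:(lia)) as [v [[Sv Ev] _]].
  destruct (Harc i ltac:(lia)) as [g [Sg Eg]].
  destruct (Harc (i + n)%nat ltac:(lia)) as [G [SG EG]].
  destruct (vertex_shift U T n tv u i HU Hi) as [T1 T2]. rewrite T1, T2 in EG.
  exists g, (fun s => G (s + T)), v.
  split; [apply C1_of_smooth, Sg|]. split; [apply C1_shift, C1_of_smooth, SG|].
  split; [apply C1_of_smooth, Sv|].
  intros s Hs. split; [|split]; symmetry; [apply Eg | apply EG | apply Ev]; lra.
Qed.

Lemma arc_tangent (U : pt -> Prop) (T : R) (n : nat) (tv : nat -> R) (u : R -> pt)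
    (gamma : R -> pt) (r : R -> R) (i : nat) :
  unit_ball_param U T n tv u -> admissible T n tv u gamma r -> (i < n)%nat ->
  forall t, tv i < t < tv (S i) ->
    dcurve gamma t = pscale (r t) (dcurve u t) /\
    dcurve gamma (t + T) = pscale (r (t + T)) (dcurve u (t + T)).
Proof.
  intros HU [_ [_ [_ Htan]]] Hi t Ht.
  destruct (vertex_shift U T n tv u i HU Hi) as [T1 T2].
  split; [apply (Htan i); [lia | exact Ht]|].
  apply (Htan (i + n)%nat); [lia | rewrite T1, T2; lra].
Qed.

Lemma balance_primitive_endpoints (T : R) (u : R -> pt) (r : R -> R) (gamma : R -> pt) :
  (forall t, gamma (t + 2 * T) = gamma t) -> (forall s, u (s + T) = popp (u s)) ->
  balance_primitive T u r gamma T = balance_primitive T u r gamma 0.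
Proof.
  intros periodic antipodal. unfold balance_primitive.
  replace (T + T) with (0 + 2 * T) by ring. rewrite periodic.
  replace T with (0 + T) at 3 by ring. rewrite antipodal, !Rplus_0_l.
  unfold det, padd, popp; simpl. ring.
Qed.

Lemma half_period_integrals (U : pt -> Prop) (T : R) (n : nat) (tv : nat -> R) (u : R -> pt)
    (gamma : R -> pt) (r : R -> R) :
  unit_ball_param U T n tv u -> admissible T n tv u gamma r ->
  densities_integrable T u r gamma 0 T /\ is_RInt (balance_density T u r gamma) 0 T 0.
Proof.
  intros HU HA.
  assert (T0 : tv 0%nat = 0) by apply (ub_t0 _ _ _ _ _ HU).
  assert (Tn : tv n = T).
  { pose proof (ub_tsym _ _ _ _ _ HU 0%nat ltac:(lia)) as E. simpl in E. rewrite E, T0. ring. }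
  assert (arcs : forall i, (i < n)%nat ->
    densities_integrable T u r gamma (tv i) (tv (S i)) /\
    is_RInt (balance_density T u r gamma) (tv i) (tv (S i))
      (balance_primitive T u r gamma (tv (S i)) - balance_primitive T u r gamma (tv i))).
  { intros i Hi.
    destruct (arc_representatives U T n tv u gamma r i HU HA Hi) as [g [h [v [Cg [Ch [Cv rep]]]]]].
    assert (ab : tv i < tv (S i)) by (apply (ub_tinc _ _ _ _ _ HU); lia).
    pose proof (ub_antipodal _ _ _ _ _ HU) as anti.
    pose proof (arc_tangent U T n tv u gamma r i HU HA Hi) as tan.
    split; [apply (arc_densities_integrable T _ _ u gamma r g h v)
           | apply (arc_balance T _ _ u gamma r g h v)]; assumption. }
  split.
  - pose proof (densities_integrable_partition T u r gamma tv n (fun i Hi => proj1 (arcs i Hi))) as I.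
    rewrite T0, Tn in I. exact I.
  - pose proof (is_RInt_partition_telescope _ _ tv n (fun i Hi => proj2 (arcs i Hi))) as I.
    rewrite T0, Tn, balance_primitive_endpoints, Rminus_diag in I; [exact I | apply HA |].
    apply (ub_antipodal _ _ _ _ _ HU).
Qed.

Lemma is_RInt_Rplus (f g : R -> R) (a b If Ig : R) :
  is_RInt f a b If -> is_RInt g a b Ig -> is_RInt (fun t => f t + g t) a b (If + Ig).
Proof. exact (is_RInt_plus f g a b If Ig). Qed.

Lemma is_RInt_Rminus (f g : R -> R) (a b If Ig : R) :
  is_RInt f a b If -> is_RInt g a b Ig -> is_RInt (fun t => f t - g t) a b (If - Ig).
Proof. exact (is_RInt_minus f g a b If Ig). Qed.

Lemma is_RInt_Rscal (f : R -> R) (a b k If : R) :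
  is_RInt f a b If -> is_RInt (fun t => k * f t) a b (k * If).
Proof. exact (is_RInt_scal f a b k If). Qed.

Lemma balance_integral (T : R) (u : R -> pt) (r : R -> R) (gamma : R -> pt) :
  densities_integrable T u r gamma 0 T ->
  is_RInt (balance_density T u r gamma) 0 T
    (RInt (area_density gamma) 0 T + RInt (fun t => area_density gamma (t + T)) 0 T
     - 2 * RInt (area_density (WC T gamma)) 0 T - 2 * RInt (area_density (CWMS T u r gamma)) 0 T
     - mean_width T u r * (RInt (dual_density u r) 0 T + RInt (fun t => dual_density u r (t + T)) 0 T)
     + / 2 * mean_width T u r ^ 2 * RInt (area_density u) 0 T).
Proof.
  intros [I1 [I2 [I3 [I4 [I5 [I6 I7]]]]]].
  apply (RInt_correct (V := R_CompleteNormedModule)) in I1, I2, I3, I4, I5, I6, I7.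
  unfold balance_density.
  apply is_RInt_Rplus; [|apply is_RInt_Rscal; exact I7].
  apply is_RInt_Rminus; [|apply is_RInt_Rscal, is_RInt_Rplus; assumption].
  apply is_RInt_Rminus; [|apply is_RInt_Rscal; exact I4].
  apply is_RInt_Rminus; [|apply is_RInt_Rscal; exact I3].
  apply is_RInt_Rplus; assumption.
Qed.

Lemma area_density_antipodal (c : R -> pt) (T : R) :
  (forall s, c (s + T) = popp (c s)) -> forall t, area_density c (t + T) = area_density c t.
Proof.
  intros anti t. unfold area_density. rewrite anti, (dcurve_antipodal c T anti).
  unfold det, popp; simpl. ring.
Qed.

Lemma CWMS_antipodal (T : R) (u : R -> pt) (r : R -> R) (gamma : R -> pt) :
  (forall t, gamma (t + 2 * T) = gamma t) -> (forall s, u (s + T) = popp (u s)) ->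
  forall s, CWMS T u r gamma (s + T) = popp (CWMS T u r gamma s).
Proof.
  intros periodic anti s. unfold CWMS.
  replace (s + T + T) with (s + 2 * T) by ring. rewrite periodic, anti.
  unfold pscale, padd, popp; simpl. f_equal; ring.
Qed.

(* Final algebra; the degenerate case A = 0 holds with the convention x / 0 = 0. *)
Lemma ratio_identity (L A X w : R) :
  w = L / A -> 2 * X = w * L - / 2 * w ^ 2 * A -> L ^ 2 / (4 * A) = X.
Proof.
  intros Hw HX. destruct (Req_dec A 0) as [A0 | A0].
  - subst A. unfold Rdiv in *. rewrite Rinv_0, Rmult_0_r in Hw. subst w.
    rewrite Rmult_0_r, Rinv_0, Rmult_0_r. lra.
  - apply Rmult_eq_reg_l with 2; [|lra]. rewrite HX, Hw. field. exact A0.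
Qed.

Theorem mainTheorem10 (U : pt -> Prop) (T : R) (n : nat) (tv : nat -> R)
    (u : R -> pt) (gamma : R -> pt) (r : R -> R) :
  unit_ball_param U T n tv u ->
  admissible T n tv u gamma r ->
  convex_curve T gamma ->
  (dual_length T u r) ^ 2 / (4 * area_U T u)
    = area_curve T gamma - 2 * area_WC T gamma - area_CWMS T u r gamma.
Proof.
  intros HU HA _.
  pose proof (ub_antipodal _ _ _ _ _ HU) as u_anti.
  pose proof (proj1 HA) as periodic.
  destruct (half_period_integrals U T n tv u gamma r HU HA) as [I balance].
  pose proof (is_RInt_unique _ _ _ _ (balance_integral T u r gamma I)) as B.
  rewrite (is_RInt_unique _ _ _ _ balance) in B.
  destruct I as [I1 [I2 [I3 [I4 [I5 [I6 I7]]]]]].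
  assert (EA : area_curve T gamma = / 2 * (RInt (area_density gamma) 0 T
                 + RInt (fun t => area_density gamma (t + T)) 0 T))
    by exact (f_equal (Rmult (/ 2)) (RInt_split_half_period _ T I1 I2)).
  assert (EC : area_CWMS T u r gamma = / 2 * (2 * RInt (area_density (CWMS T u r gamma)) 0 T))
    by exact (f_equal (Rmult (/ 2)) (RInt_double_half_period _ T I4
      (area_density_antipodal _ T (CWMS_antipodal T u r gamma periodic u_anti)))).
  assert (EU : area_U T u = / 2 * (2 * RInt (area_density u) 0 T))
    by exact (f_equal (Rmult (/ 2)) (RInt_double_half_period _ T I7
      (area_density_antipodal _ T u_anti))).
  assert (EL : dual_length T u r = RInt (dual_density u r) 0 T
                 + RInt (fun t => dual_density u r (t + T)) 0 T)
    by exact (RInt_split_half_period _ T I5 I6).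
  apply (ratio_identity _ _ _ (mean_width T u r)); [reflexivity|].
  unfold area_WC. rewrite EA, EC, EU, EL.
  change (RInt (fun t => det (WC T gamma t) (dcurve (WC T gamma) t)) 0 T)
    with (RInt (area_density (WC T gamma)) 0 T).
  lra.
Qed.
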